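(* Let $n\geq 5$, let $S$ be the set of all $3$-cycles in $S_n$, and let $CAG_n=\mathrm{Cay}(A_n,S)$. Let $G_e$ be the set of automorphisms of $CAG_n$ fixing the identity vertex $e$. Let $g\in G_e$ and $\alpha,\beta\in S$ (not necessarily distinct). If $\alpha^g=\beta$, then $(\alpha^{-1})^g=\beta^{-1}$.
   Context: For a finite group $\Gamma$ and a subset $T\subseteq\Gamma$ with $e\notin T$ and $T=T^{-1}$, the Cayley graph $\mathrm{Cay}(\Gamma,T)$ is the undirected graph with vertex set $\Gamma$ and edge set $\{\{\gamma,t\gamma\}\mid \gamma\in\Gamma, t\in T\}$. $x^g$ denotes the image of the vertex $x$ under the automorphism $g$. *)

From mathcomp Require Import all_boot all_fingroup all_solvable.
Set Implicit Arguments. Unset Strict Implicit. Unset Printing Implicit Defensive.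
Local Open Scope group_scope.

Definition is_3cycle (n : nat) (s : 'S_n) : Prop :=
  exists a b c : 'I_n,
    [/\ a != b, b != c & a != c] /\
    [/\ s a = b, s b = c & s c = a] /\
    (forall x, x != a -> x != b -> x != c -> s x = x).

Definition three_cycles (n : nat) : 'S_n -> Prop := fun s => is_3cycle s.

Definition vert (n : nat) := {x : 'S_n | x \in ('Alt_('I_n))}.

Definition cag_adj (n : nat) (x y : vert n) : Prop :=
  exists t : 'S_n, three_cycles t /\ val y = t * val x.

Definition is_cag_aut (n : nat) (g : {perm vert n}) : Prop :=
  forall x y : vert n, cag_adj (g x) (g y) <-> cag_adj x y.

From mathcomp Require Import all_boot all_fingroup all_solvable.
Set Implicit Arguments. Unset Strict Implicit. Unset Printing Implicit Defensive.
Local Open Scope group_scope.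

(* The inverse of a 3-cycle alpha is recognised graph-theoretically: among the
   common neighbours w of e and alpha, alpha^-1 is the only one for which e,
   alpha and w have no common neighbour.  Indeed no 3-cycle z makes both
   z alpha and z alpha^-1 3-cycles, while for any other such w a common
   neighbour can be written down using a fifth point (here n >= 5 is needed).
   Automorphisms fixing e preserve this description, hence map alpha^-1 to
   beta^-1. *)

Definition common_nbr (T : Type) (adj : T -> T -> Prop) (u v w : T) : Prop :=
  exists z, [/\ adj u z, adj v z & adj w z].

Definition isolated_common_nbr (T : Type) (adj : T -> T -> Prop) (u v w : T) :=
  [/\ adj u w, adj v w & ~ common_nbr adj u v w].

Section GraphAutomorphism.
Variables (T : finType) (adj : T -> T -> Prop) (g : {perm T}).
Hypothesis g_adj : forall x y, adj (g x) (g y) <-> adj x y.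

Lemma common_nbr_aut u v w : common_nbr adj (g u) (g v) (g w) -> common_nbr adj u v w.
Proof.
case=> z [uz vz wz]; exists (g^-1 z).
by split; apply/g_adj; rewrite permKV.
Qed.

Lemma isolated_common_nbr_aut u v w :
  isolated_common_nbr adj u v w -> isolated_common_nbr adj (g u) (g v) (g w).
Proof.
case=> uw vw no_nbr; split; try exact/g_adj.
by move/common_nbr_aut.
Qed.

End GraphAutomorphism.

Section ThreeCycles.
Variable n : nat.
Implicit Types (a b c d p q r x y t v : 'I_n) (s w z : 'S_n).

Lemma tperm_if a b v : tperm a b v = if v == a then b else if v == b then a else v.
Proof.
by case: tpermP => [->|->|/eqP/negbTE-> /eqP/negbTE->]; rewrite ?eqxx //; case: eqP => [->|].
Qed.

Definition cycle3 a b c : 'S_n := tperm a b * tperm a c.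

Lemma cycle3E a b c v : cycle3 a b c v = tperm a c (tperm a b v).
Proof. by rewrite permM. Qed.

Ltac perm_eval := rewrite ?permM ?cycle3E ?perm1 ?tperm_if.

Ltac simpl_eq_ord := repeat (first
  [ rewrite eqxx /=
  | match goal with
    | H : is_true (?x != ?y) |- context [?x == ?y] => rewrite (negbTE H) /=
    | H : is_true (?y != ?x) |- context [?x == ?y] => rewrite [x == y]eq_sym (negbTE H) /=
    end ]).

Ltac case_eq_ord := simpl_eq_ord; try done;
  repeat (match goal with
    | H : is_true (?z != ?z) |- _ => by rewrite eqxx in H
    | |- context [?u == ?x] =>
        is_var u; is_var x; case: (eqVneq u x) => [?|?]; [subst|]; simpl_eq_ord
    end; try done).

Ltac perm_ext := apply/permP => v; perm_eval; case_eq_ord.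

Lemma is_3cycle_cycle3 a b c : a != b -> b != c -> a != c -> is_3cycle (cycle3 a b c).
Proof.
move=> ab bc ac; exists a, b, c; split; first by split.
split; first by split; perm_eval; case_eq_ord.
by move=> v va vb vc; perm_eval; case_eq_ord.
Qed.

Lemma is_3cycleE s :
  is_3cycle s -> exists a b c, [/\ a != b, b != c & a != c] /\ s = cycle3 a b c.
Proof.
move=> [a [b [c [[ab bc ac] [[sa sb sc] s_id]]]]].
exists a, b, c; split => //; apply/permP => v.
case: (eqVneq v a) => [->|va]; first by rewrite sa; perm_eval; case_eq_ord.
case: (eqVneq v b) => [->|vb]; first by rewrite sb; perm_eval; case_eq_ord.
case: (eqVneq v c) => [->|vc]; first by rewrite sc; perm_eval; case_eq_ord.
by rewrite s_id //; perm_eval; case_eq_ord.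
Qed.

Lemma cycle3V a b c : (cycle3 a b c)^-1 = cycle3 a c b.
Proof. by rewrite invMg !tpermV. Qed.

Lemma is_3cycleV s : is_3cycle s -> is_3cycle s^-1.
Proof.
case/is_3cycleE=> [a [b [c [[ab bc ac] ->]]]].
by rewrite cycle3V; apply: is_3cycle_cycle3; rewrite // eq_sym.
Qed.

Lemma cycle3_sqr a b c : a != b -> b != c -> a != c -> cycle3 a b c * cycle3 a b c = cycle3 a c b.
Proof. by move=> ab bc ac; perm_ext. Qed.

Lemma is_3cycle_even s : is_3cycle s -> s \in 'Alt_('I_n).
Proof.
case/is_3cycleE=> [a [b [c [[ab bc ac] ->]]]].
by rewrite Alt_even odd_permM !odd_tperm ab ac.
Qed.

Lemma is_3cycle_neq1 s : is_3cycle s -> s <> 1.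
Proof.
case/is_3cycleE=> [a [b [c [[ab bc ac] ->]]]] /permP /(_ a).
by perm_eval => /eqP; case_eq_ord.
Qed.

Lemma is_3cycle_moves_le3 s x1 x2 x3 x4 : is_3cycle s ->
  x1 != x2 -> x1 != x3 -> x1 != x4 -> x2 != x3 -> x2 != x4 -> x3 != x4 ->
  s x1 != x1 -> s x2 != x2 -> s x3 != x3 -> s x4 != x4 -> False.
Proof.
case/is_3cycleE=> [a [b [c [[ab bc ac] ->]]]] d12 d13 d14 d23 d24 d34.
have moved v : cycle3 a b c v != v -> [|| v == a, v == b | v == c].
  by perm_eval; case_eq_ord.
move/moved=> h1 /moved h2 /moved h3 /moved h4.
by case/or3P: h1 => /eqP ?; case/or3P: h2 => /eqP ?; case/or3P: h3 => /eqP ?;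
   case/or3P: h4 => /eqP ?; subst; rewrite ?eqxx in d12 d13 d14 d23 d24 d34.
Qed.

Lemma exists_fresh_ord (xs : seq 'I_n) : size xs < n -> exists e, e \notin xs.
Proof.
move=> small; apply/existsP; apply: contraTT small => /existsPn all_in.
rewrite -leqNgt -{1}(card_ord n); apply: (leq_trans _ (card_size xs)).
by apply/subset_leq_card/subsetP => x _; move: (all_in x); rewrite negbK.
Qed.

Ltac locate p a b c := case: (eqVneq p a) => [?|?]; [subst p|
  case: (eqVneq p b) => [?|?]; [subst p|case: (eqVneq p c) => [?|?]; [subst p|]]].

(* Refute a product [H : is_3cycle P] by showing [P = 1] or exhibiting four
   points moved by [P]. *)
Ltac refute_3cycle H :=
  solve [ apply: (is_3cycle_neq1 H); perm_ext
        | match goal with x1 : 'I_?m, x2 : 'I_?m, x3 : 'I_?m, x4 : 'I_?m |- _ =>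
            apply: (is_3cycle_moves_le3 (x1:=x1) (x2:=x2) (x3:=x3) (x4:=x4) H);
            solve [ by [] | by rewrite eq_sym | perm_eval; case_eq_ord ] end ].

Lemma not_is_3cycle_mul_mulV s z : is_3cycle s -> is_3cycle z ->
  is_3cycle (z * s) -> is_3cycle (z * s^-1) -> False.
Proof.
case/is_3cycleE=> [a [b [c [[ab bc ac] ->]]]].
case/is_3cycleE=> [p [q [r [[pq qr pr] ->]]]]; rewrite cycle3V => H1 H2.
locate p a b c; locate q a b c; locate r a b c;
  rewrite ?eqxx in ab bc ac pq qr pr;
  first [ done | refute_3cycle H1 | refute_3cycle H2 ].
Qed.

Section FifthPoint.
Hypothesis n_ge5 : 5 <= n.

(* With [z = cycle3 x t e] for a fifth point [e], one gets
   [z * cycle3 x y t = cycle3 t e y] and [z * (cycle3 x t d)^-1 = cycle3 t e d]. *)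
Lemma exists_3cycle_mul_pair s w x y t d :
  x != y -> y != t -> x != t -> d != x -> d != y -> d != t ->
  s = cycle3 x y t -> w = cycle3 x t d ->
  exists z, [/\ is_3cycle z, is_3cycle (z * s) & is_3cycle (z * w^-1)].
Proof.
move=> xy yt xt dx dy dt -> ->.
have [e] := @exists_fresh_ord [:: x; y; t; d] (leq_trans (ltnSn 4) n_ge5).
rewrite !inE !negb_or => /and4P [ex ey et ed].
exists (cycle3 x t e); split; first by apply: is_3cycle_cycle3; rewrite // eq_sym.
  have -> : cycle3 x t e * cycle3 x y t = cycle3 t e y by perm_ext.
  by apply: is_3cycle_cycle3; rewrite // eq_sym.
have -> : cycle3 x t e * (cycle3 x t d)^-1 = cycle3 t e d by rewrite cycle3V; perm_ext.
by apply: is_3cycle_cycle3; rewrite // eq_sym.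
Qed.

Ltac close_by_pair a b c :=
  let close := solve [ by [] | by rewrite eq_sym | perm_ext ] in
  match goal with d : 'I_?m |- _ =>
  first [ apply: (exists_3cycle_mul_pair (x:=a) (y:=b) (t:=c) (d:=d)); close
        | apply: (exists_3cycle_mul_pair (x:=b) (y:=c) (t:=a) (d:=d)); close
        | apply: (exists_3cycle_mul_pair (x:=c) (y:=a) (t:=b) (d:=d)); close ] end.

Lemma exists_3cycle_common_mul s w : is_3cycle s -> is_3cycle w ->
  is_3cycle (w * s) -> w != s ->
  exists z, [/\ is_3cycle z, is_3cycle (z * s) & is_3cycle (z * w^-1)].
Proof.
case/is_3cycleE=> [a [b [c [[ab bc ac] ->]]]].
case/is_3cycleE=> [p [q [r [[pq qr pr] ->]]]] H1 Hne.
locate p a b c; locate q a b c; locate r a b c;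
  rewrite ?eqxx in ab bc ac pq qr pr;
  first [ done | solve [exfalso; refute_3cycle H1]
        | solve [exfalso; move/eqP: Hne; apply; perm_ext]
        | close_by_pair a b c ].
Qed.

End FifthPoint.

End ThreeCycles.

Definition vert1 (n : nat) : vert n := exist _ 1 (group1 _).

Lemma cag_adjE n (x y : vert n) : cag_adj x y <-> is_3cycle (val y * (val x)^-1).
Proof.
split; first by case=> t [t3 ->]; rewrite mulgK.
by move=> yx3; exists (val y * (val x)^-1); rewrite mulgKV.
Qed.

Lemma cag_adj1 n (w : vert n) : cag_adj (vert1 n) w <-> is_3cycle (val w).
Proof. by have := cag_adjE (vert1 n) w; rewrite /= invg1 mulg1. Qed.

Lemma isolated_common_nbr_inv n (a ai : vert n) :
  is_3cycle (val a) -> val ai = (val a)^-1 -> isolated_common_nbr (@cag_adj n) (vert1 n) a ai.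
Proof.
move=> a3 aiE; split.
- by apply/cag_adj1; rewrite aiE; apply: is_3cycleV.
- apply/cag_adjE; have [x [y [z [[xy yz xz] aE]]]] := is_3cycleE a3.
  by rewrite aiE aE cycle3V cycle3_sqr ?(eq_sym z); first apply: is_3cycle_cycle3.
case=> u [/cag_adj1 u3 /cag_adjE ua3 /cag_adjE]; rewrite aiE invgK => uai3.
by apply: (not_is_3cycle_mul_mulV (is_3cycleV a3) u3); rewrite ?invgK.
Qed.

Lemma isolated_common_nbr_invE n (b w : vert n) : 5 <= n -> is_3cycle (val b) ->
  isolated_common_nbr (@cag_adj n) (vert1 n) b w -> val w = (val b)^-1.
Proof.
move=> n_ge5 b3 [/cag_adj1 w3 /cag_adjE wb3 no_nbr].
have [//|wNb] := eqVneq (val w) (val b)^-1; exfalso.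
have [z [z3 zb3 zw3]] := exists_3cycle_common_mul n_ge5 (is_3cycleV b3) w3 wb3 wNb.
apply: no_nbr; exists (exist _ z (is_3cycle_even z3)).
by split; [apply/cag_adj1 | apply/cag_adjE | apply/cag_adjE].
Qed.

Theorem lemma3p3 (n : nat) (Hn : 5 <= n) (g : {perm vert n})
  (Hg : is_cag_aut g)
  (He : forall e : vert n, val e = 1 -> g e = e)
  (alpha beta : vert n)
  (Ha : three_cycles (val alpha)) (Hb : three_cycles (val beta))
  (Hab : g alpha = beta)
  (alphai betai : vert n)
  (Hai : val alphai = (val alpha)^-1) (Hbi : val betai = (val beta)^-1) :
  g alphai = betai.
Proof.
have g1 : g (vert1 n) = vert1 n by exact: He.
have := isolated_common_nbr_aut Hg (isolated_common_nbr_inv Ha Hai).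
rewrite g1 Hab => /(isolated_common_nbr_invE Hn Hb) gaiE.
by apply: val_inj; rewrite gaiE Hbi.
Qed.
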